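(* Let $f\in\mathbb{F}_q[t][X]$ have $X$-degree $n\ge1$, and for $0\le i\le n-1$ let $B_i=\sup\{m\in\mathbb{N}:(m,i)\in N(f)+\{(0,-1)\}\}$. Let $g\in\mathbb{F}_q[t][X]$ be a nonzero polynomial dividing $f$ in $\mathbb{F}_q[t][X]$ and write $\Phi(g):=fg'/g=\sum_{i=0}^{n-1}a_i(t)X^i$. Then for each $i$ with $a_i\neq0$, the set defining $B_i$ is nonempty and $\deg a_i\le B_i$.
   Context: The Newton polygon $N(h)\subset\mathbb{R}^2$ of $h\in\mathbb{F}_q[t,X]$ is the convex hull of all points $(a,b)$ such that the coefficient of $t^aX^b$ in $h$ is nonzero. For $S_1,S_2\subseteq\mathbb{R}^2$, $S_1+S_2=\{s_1+s_2:s_1\in S_1,s_2\in S_2\}$. $g'$ is the derivative with respect to $X$. *)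

From HB Require Import structures.
From mathcomp Require Import all_boot all_order all_algebra.
Set Implicit Arguments. Unset Strict Implicit. Unset Printing Implicit Defensive.
Import Order.TTheory GRing.Theory Num.Theory.
Local Open Scope ring_scope.

(* Polynomials in F[t][X] are represented as {poly {poly F}}: the outer
   variable is X, the coefficients are polynomials in t.  The coefficient of
   t^a X^b in f is (f`_b)`_a. *)

Definition plane_set (R : realFieldType) := R * R -> Prop.

Definition newton_polygon (F : fieldType) (R : realFieldType)
  (f : {poly {poly F}}) : plane_set R :=
  fun p => exists (k : nat) (pts : 'I_k -> nat * nat) (w : 'I_k -> R),
    [/\ forall j, (f`_(pts j).2)`_(pts j).1 != 0,
        forall j, 0 <= w j,
        \sum_(j < k) w j = 1,
        p.1 = \sum_(j < k) w j * ((pts j).1)%:R &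
        p.2 = \sum_(j < k) w j * ((pts j).2)%:R].

Arguments newton_polygon {F} R f.

Definition minkowski_sum (R : realFieldType) (S1 S2 : plane_set R) : plane_set R :=
  fun p => exists p1 p2, [/\ S1 p1, S2 p2 & p = (p1.1 + p2.1, p1.2 + p2.2)].

Definition singleton_pt (R : realFieldType) (q : R * R) : plane_set R :=
  fun p => p = q.

Definition B_set (F : fieldType) (R : realFieldType) (f : {poly {poly F}})
  (i : nat) : nat -> Prop :=
  fun m => minkowski_sum (newton_polygon R f) (singleton_pt (0, -1))
             ((m%:R : R), (i%:R : R)).

Arguments B_set {F} R f i.

(* Write f = g h, so that Phi(g) = h g'.  Its i-th X-coefficient is a sum of
   products h_k (l g_l) with k + l = i + 1, so its t-degree is at most
   deg h_k + deg g_l for one such pair with h_k, g_l nonzero.  The point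
   (deg g_l + deg h_k, i + 1) lies in N(g) + N(h), which is contained in N(f):
   the maximum of any linear form over the support of g h is at least the sum
   of its maxima over the supports of g and h, since the coefficient of g h at
   the sum of the (lexicographically refined) maximisers is a product of two
   nonzero coefficients.  On the line b = i + 1, a one-dimensional duality
   argument turns these inequalities, for the forms +-a + w b, into points of
   N(f) on both sides of the target point.  Shifting by (0, -1) puts deg a_i
   in the set defining B_i. *)

From HB Require Import structures.
From mathcomp Require Import all_boot all_order all_algebra.
From mathcomp Require Import reals.
From mathcomp Require Import ring lra zify.
From Stdlib Require Import Classical.
Import Order.TTheory GRing.Theory Num.Theory.
Local Open Scope ring_scope.

Lemma seq_argmax (R : realDomainType) (T : eqType) (s : seq T) (F : T -> R) :
  s != [::] -> exists2 x, x \in s & forall y, y \in s -> F y <= F x.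
Proof.
elim: s => [//|a s IH] _.
case: (eqVneq s [::]) => [->|/IH [x xs Hx]].
  by exists a => [|y]; rewrite ?mem_head // inE => /eqP ->.
case: (leP (F a) (F x)) => [le_ax|lt_xa].
  by exists x => [|y]; rewrite inE ?xs ?orbT // => /predU1P [->|/Hx].
exists a => [|y]; first exact: mem_head.
by rewrite inE => /predU1P [->//|/Hx le_yx]; exact: le_trans le_yx (ltW lt_xa).
Qed.

Arguments seq_argmax {R T s} F.

Lemma exists_between_seq (R : realFieldType) (xs ys : seq R) :
  (forall x y, x \in xs -> y \in ys -> x < y) ->
  exists w, (forall x, x \in xs -> x < w) /\ (forall y, y \in ys -> w < y).
Proof.
move=> lt_xy.
case: (eqVneq xs [::]) => [->|/(seq_argmax id) [xm xm_xs max_xm]];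
case: (eqVneq ys [::]) => [->|/(seq_argmax (fun y => - y)) [ym ym_ys min_ym]].
- by exists 0.
- by exists (ym - 1); split => // y /min_ym; rewrite lerN2 => ?; lra.
- by exists (xm + 1); split => // x /max_xm => ?; lra.
- have := lt_xy _ _ xm_xs ym_ys => ?.
  exists ((xm + ym) / 2); split => [x /max_xm|y /min_ym]; rewrite ?lerN2 => ?; lra.
Qed.

(* The hypotheses say that no point of [S] on the line [b = y0], and no
   crossing of that line by a segment joining two points of [S], lies at
   abscissa [>= d]. *)
Lemma separating_weight (R : realFieldType) (S : seq (R * R)) (y0 d : R) :
  (forall q, q \in S -> q.2 = y0 -> q.1 < d) ->
  (forall q1 q2, q1 \in S -> q2 \in S -> q1.2 < y0 -> y0 < q2.2 ->
     (q1.1 - d) * (q2.2 - y0) < (d - q2.1) * (y0 - q1.2)) ->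
  exists w, forall q, q \in S -> q.1 + w * q.2 < d + w * y0.
Proof.
move=> on_line crossing.
pose xs := [seq (q.1 - d) / (y0 - q.2) | q <- S & q.2 < y0].
pose ys := [seq (d - q.1) / (q.2 - y0) | q <- S & y0 < q.2].
have [w [lt_xs_w lt_w_ys]] :
    exists w, (forall x, x \in xs -> x < w) /\ (forall y, y \in ys -> w < y).
  apply: exists_between_seq => x y /mapP [q1 + ->] /mapP [q2 + ->].
  rewrite !mem_filter => /andP [below q1S] /andP [above q2S].
  rewrite ltr_pdivrMr ?subr_gt0 // mulrAC ltr_pdivlMr ?subr_gt0 //.
  exact: crossing.
exists w => q qS; case: (ltgtP q.2 y0) => [below|above|/[dup] eq_y /on_line].
- have /lt_xs_w : (q.1 - d) / (y0 - q.2) \in xs.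
    by apply: map_f; rewrite mem_filter below qS.
  by rewrite ltr_pdivrMr ?subr_gt0 // => ?; nra.
- have /lt_w_ys : (d - q.1) / (q.2 - y0) \in ys.
    by apply: map_f; rewrite mem_filter above qS.
  by rewrite ltr_pdivlMr ?subr_gt0 // => ?; nra.
- by move=> /(_ qS); rewrite eq_y; lra.
Qed.

Lemma conv2_on_line_of_weights {R : realFieldType} {S : seq (R * R)} {y0 d : R} :
  (forall w : R, exists2 q, q \in S & d + w * y0 <= q.1 + w * q.2) ->
  exists q1 q2 lam, [/\ q1 \in S, q2 \in S, 0 <= lam <= 1,
     lam * q1.2 + (1 - lam) * q2.2 = y0 & d <= lam * q1.1 + (1 - lam) * q2.1].
Proof.
move=> weights; apply: NNPP => no_conv.
have [|q1 q2 q1S q2S below above|w sep_w] := @separating_weight R S y0 d.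
- move=> q qS eq_y; rewrite ltNge; apply/negP => le_d; apply: no_conv.
  exists q, q, 1; rewrite subrr !mul0r !addr0 !mul1r.
  by split; rewrite ?ler01 ?lexx.
- rewrite ltNge; apply/negP => le_cross; apply: no_conv.
  set D := q2.2 - q1.2.
  have D_gt0 : 0 < D by rewrite /D; lra.
  have D_neq0 : D != 0 by exact: lt0r_neq0.
  have lamC : 1 - (q2.2 - y0) / D = (y0 - q1.2) / D by rewrite /D; field.
  exists q1, q2, ((q2.2 - y0) / D); split => //.
  + rewrite divr_ge0 ?ler_pdivrMr //=; rewrite /D; lra.
  + by rewrite lamC /D; field.
  + rewrite lamC mulrAC [X in _ + X]mulrAC -mulrDl ler_pdivlMr //.
    rewrite /D; nra.
- by have [q qS] := weights w; have := sep_w q qS; lra.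
Qed.

(* The pair (a, b) stands for the monomial t^a X^b. *)
Definition bisupport (K : nzRingType) (p : {poly {poly K}}) : seq (nat * nat) :=
  [seq q <- [seq (a, b) | b <- iota 0 (size p), a <- iota 0 (size p`_b)]
     | p`_q.2`_q.1 != 0].
Arguments bisupport {K}.

Lemma mem_bisupport (K : nzRingType) (p : {poly {poly K}}) (q : nat * nat) :
  (q \in bisupport p) = (p`_q.2`_q.1 != 0).
Proof.
rewrite mem_filter andb_idr // => nz; case: q nz => a b /= nz.
apply/allpairsPdep; exists b, a; rewrite !mem_iota /= !add0n; split => //.
  by rewrite ltnNge; apply: contra nz => /(nth_default 0) ->; rewrite coef0.
by rewrite ltnNge; apply: contra nz => /(nth_default 0) ->.
Qed.

Definition weight (R : realFieldType) (u w : R) (q : nat * nat) : R :=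
  u * q.1%:R + w * q.2%:R.
Arguments weight {R}.

Lemma weightD (R : realFieldType) (u w : R) (a1 b1 a2 b2 : nat) :
  weight u w (a1 + a2, b1 + b2)%N = weight u w (a1, b1) + weight u w (a2, b2).
Proof. by rewrite /weight /= !natrD; ring. Qed.
Arguments weightD {R}.

Definition weight_lexmax (R : realFieldType) (u w : R) (s : seq (nat * nat))
    (p : nat * nat) :=
  [/\ p \in s, forall x, x \in s -> weight u w x <= weight u w p,
      forall x, x \in s -> weight u w x = weight u w p -> (x.2 <= p.2)%N &
      forall x, x \in s -> weight u w x = weight u w p -> x.2 = p.2 ->
        (x.1 <= p.1)%N].
Arguments weight_lexmax {R}.

Lemma exists_weight_lexmax {R : realFieldType} (u w : R) (s : seq (nat * nat)) :
  s != [::] -> exists p, weight_lexmax u w s p.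
Proof.
move=> s_neq0.
have [p1 p1s max_p1] := seq_argmax (weight u w) s_neq0.
pose s1 := [seq x <- s | weight u w x == weight u w p1].
have p1s1 : p1 \in s1 by rewrite mem_filter eqxx.
have /(seq_argmax (fun x => x.2%:R : R)) [p2 p2s1 max_p2] : s1 != [::].
  by apply: contraTneq p1s1 => ->.
pose s2 := [seq x <- s1 | x.2 == p2.2].
have p2s2 : p2 \in s2 by rewrite mem_filter eqxx.
have /(seq_argmax (fun x => x.1%:R : R)) [p3 p3s2 max_p3] : s2 != [::].
  by apply: contraTneq p2s2 => ->.
move: (p3s2); rewrite !mem_filter => /and3P [/eqP eq_y /eqP eq_w p3s].
exists p3; split => // [x /max_p1|x xs eq_xw|x xs eq_xw eq_xy].
- by rewrite eq_w.
- by rewrite eq_y -(ler_nat R) max_p2 // mem_filter eq_xw eq_w eqxx.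
- by rewrite -(ler_nat R) max_p3 // !mem_filter eq_xy eq_y eq_xw eq_w !eqxx.
Qed.

Lemma weight_lexmax_sum_uniq {R : realFieldType} {u w : R}
    {s1 s2 : seq (nat * nat)} {p1 p2 x1 x2 : nat * nat} :
  weight_lexmax u w s1 p1 -> weight_lexmax u w s2 p2 ->
  x1 \in s1 -> x2 \in s2 ->
  (x1.1 + x2.1 = p1.1 + p2.1)%N -> (x1.2 + x2.2 = p1.2 + p2.2)%N -> x1 = p1.
Proof.
case: p1 p2 x1 x2 => [a1 b1] [a2 b2] [c1 d1] [c2 d2] /= [_ W1 Y1 X1] [_ W2 Y2 X2]
  x1s x2s sum_a sum_b.
have /= := weightD u w c1 d1 c2 d2; rewrite sum_a sum_b weightD.
move: (W1 _ x1s) (W2 _ x2s) => le1 le2 eq_sum.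
have eq1 : weight u w (c1, d1) = weight u w (a1, b1) by lra.
have eq2 : weight u w (c2, d2) = weight u w (a2, b2) by lra.
have /= le_d1 := Y1 _ x1s eq1; have /= le_d2 := Y2 _ x2s eq2.
have eq_d1 : d1 = b1 by lia.
have eq_d2 : d2 = b2 by lia.
have /= := X1 _ x1s eq1 eq_d1; have /= := X2 _ x2s eq2 eq_d2.
by rewrite eq_d1 => ? ?; congr pair; lia.
Qed.

Lemma coef_mul_weight_lexmax {K : nzRingType} {R : realFieldType} {u w : R}
    {g h : {poly {poly K}}} {a1 b1 a2 b2 : nat} :
  weight_lexmax u w (bisupport g) (a1, b1) ->
  weight_lexmax u w (bisupport h) (a2, b2) ->
  (g * h)`_(b1 + b2)`_(a1 + a2) = g`_b1`_a1 * h`_b2`_a2.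
Proof.
move=> max1 max2.
have corner k c : (k <= b1 + b2)%N -> (c <= a1 + a2)%N ->
    g`_k`_c * h`_(b1 + b2 - k)`_(a1 + a2 - c) != 0 -> (c, k) = (a1, b1).
  move=> le_k le_c nz.
  apply: (weight_lexmax_sum_uniq (x2 := (a1 + a2 - c, b1 + b2 - k)%N) max1 max2);
    rewrite ?mem_bisupport /= ?subnKC //.
    by apply: contraNneq nz => ->; rewrite mul0r.
  by apply: contraNneq nz => ->; rewrite mulr0.
have lt_b1 : (b1 < (b1 + b2).+1)%N by rewrite ltnS leq_addr.
have lt_a1 : (a1 < (a1 + a2).+1)%N by rewrite ltnS leq_addr.
rewrite coefM coef_sum (bigD1 (Ordinal lt_b1)) //= big1 => [|[k lt_k] ne_k].
  rewrite addr0 coefM addKn (bigD1 (Ordinal lt_a1)) //= big1 => [|[c lt_c] ne_c].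
    by rewrite addr0 addKn.
  apply/eqP; apply: contraR ne_c => nz; apply/eqP/val_inj => /=.
  by have := corner b1 c (leq_addr _ _) lt_c; rewrite addKn => /(_ nz) [->].
rewrite coefM; apply: big1 => [[c lt_c]] _; apply/eqP.
apply: contraR ne_k.
by move=> /(corner k c lt_k lt_c) [_ eq_k]; apply/eqP/val_inj.
Qed.

Lemma weight_le_bisupport_mul {K : idomainType} {R : realFieldType} (u w : R)
    {g h : {poly {poly K}}} {P Q : nat * nat} :
  P \in bisupport g -> Q \in bisupport h ->
  exists2 q, q \in bisupport (g * h) & weight u w P + weight u w Q <= weight u w q.
Proof.
move=> Pg Qh.
have /(exists_weight_lexmax u w) [[a1 b1] max1] : bisupport g != [::].
  by apply: contraTneq Pg => ->.
have /(exists_weight_lexmax u w) [[a2 b2] max2] : bisupport h != [::].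
  by apply: contraTneq Qh => ->.
exists (a1 + a2, b1 + b2)%N.
  rewrite mem_bisupport /= (coef_mul_weight_lexmax max1 max2).
  by case: max1 max2 => [+ _ _ _] [+ _ _ _]; rewrite !mem_bisupport; exact: mulf_neq0.
by rewrite weightD; apply: lerD; [case: max1 => _ + _ _ | case: max2 => _ + _ _]; apply.
Qed.

Lemma newton_polygon_coef (F : fieldType) (R : realFieldType)
    (f : {poly {poly F}}) (a b : nat) :
  f`_b`_a != 0 -> newton_polygon R f (a%:R, b%:R).
Proof.
move=> nz; exists 1%N, (fun _ => (a, b)), (fun _ => 1).
by split; rewrite ?big_ord1 ?mul1r.
Qed.
Arguments newton_polygon_coef {F} R {f a b}.

Lemma newton_polygon_conv (F : fieldType) (R : realFieldType)
    (f : {poly {poly F}}) (p q : R * R) (lam : R) :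
  newton_polygon R f p -> newton_polygon R f q -> 0 <= lam <= 1 ->
  newton_polygon R f (lam * p.1 + (1 - lam) * q.1, lam * p.2 + (1 - lam) * q.2).
Proof.
move=> [k1 [pts1 [w1 [nz1 w1_ge0 sum_w1 -> ->]]]].
move=> [k2 [pts2 [w2 [nz2 w2_ge0 sum_w2 -> ->]]]] /andP [lam_ge0 lam_le1].
pose pts j := match split j with inl j1 => pts1 j1 | inr j2 => pts2 j2 end.
pose wt j := match split j with inl j1 => lam * w1 j1 | inr j2 => (1 - lam) * w2 j2 end.
have split_l (j : 'I_k1) : split (lshift k2 j) = inl j := unsplitK (inl j).
have split_r (j : 'I_k2) : split (rshift k1 j) = inr j := unsplitK (inr j).
have sum_wt (c : (nat * nat) -> R) :
    \sum_(j < k1 + k2) wt j * c (pts j)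
    = lam * \sum_(j < k1) w1 j * c (pts1 j) + (1 - lam) * \sum_(j < k2) w2 j * c (pts2 j).
  rewrite big_split_ord !mulr_sumr /pts /wt.
  by congr (_ + _); apply: eq_bigr => j _; rewrite ?split_l ?split_r mulrA.
exists (k1 + k2)%N, pts, wt; split.
- by move=> j; rewrite /pts; case: (split j).
- by move=> j; rewrite /wt; case: (split j) => j'; apply: mulr_ge0; rewrite // subr_ge0.
- have := sum_wt (fun _ => 1).
  by rewrite !(eq_bigr _ (fun _ _ => mulr1 _)) sum_w1 sum_w2 => ->; ring.
- by rewrite (sum_wt (fun q => q.1%:R)).
- by rewrite (sum_wt (fun q => q.2%:R)).
Qed.
Arguments newton_polygon_conv {F R f p q lam}.

Lemma newton_polygon_segment (F : fieldType) (R : realFieldType)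
    (f : {poly {poly F}}) (x1 x2 x y : R) :
  newton_polygon R f (x1, y) -> newton_polygon R f (x2, y) -> x1 <= x <= x2 ->
  newton_polygon R f (x, y).
Proof.
move=> N1 N2 /andP [le1 le2].
case: (eqVneq x1 x2) => [eq_x | ne_x].
  by have -> : x = x1 by rewrite eq_x in le1 *; apply/eqP; rewrite eq_le le1 le2.
have gap : 0 < x2 - x1 by rewrite subr_gt0 lt_neqAle ne_x (le_trans le1 le2).
have lam01 : 0 <= (x2 - x) / (x2 - x1) <= 1.
  by rewrite divr_ge0 ?subr_ge0 ?ler_pdivrMr //=; lra.
have := newton_polygon_conv N1 N2 lam01; rewrite /=.
have -> : (x2 - x) / (x2 - x1) * x1 + (1 - (x2 - x) / (x2 - x1)) * x2 = x.
  by field; exact: lt0r_neq0.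
by have -> : forall l : R, l * y + (1 - l) * y = y by move=> l; ring.
Qed.
Arguments newton_polygon_segment {F R f x1 x2 x y}.

Lemma newton_polygon_mul_line {F : fieldType} {R : realFieldType} (u : R)
    {g h : {poly {poly F}}} {P Q : nat * nat} :
  P \in bisupport g -> Q \in bisupport h ->
  exists x, newton_polygon R (g * h) (x, (P.2 + Q.2)%:R) /\
            u * (P.1 + Q.1)%:R <= u * x.
Proof.
move=> Pg Qh.
pose S := [seq (u * q.1%:R, q.2%:R : R) | q <- bisupport (g * h)].
have weights w : exists2 q, q \in S &
    u * (P.1 + Q.1)%:R + w * (P.2 + Q.2)%:R <= q.1 + w * q.2.
  have [q qS le_w] := weight_le_bisupport_mul u w Pg Qh.
  exists (u * q.1%:R, q.2%:R); first exact: map_f.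
  by move: le_w; rewrite /weight /= !natrD; lra.
have [q1 [q2 [lam [q1S q2S lam01 on_line le_x]]]] := conv2_on_line_of_weights weights.
move: q1S q2S on_line le_x => /mapP [[a1 b1] + ->] /mapP [[a2 b2] + ->] /=.
rewrite !mem_bisupport /= => nz1 nz2 <- le_x.
exists (lam * a1%:R + (1 - lam) * a2%:R); split.
  exact: (newton_polygon_conv (newton_polygon_coef R nz1) (newton_polygon_coef R nz2)).
have -> : u * (lam * a1%:R + (1 - lam) * a2%:R)
          = lam * (u * a1%:R) + (1 - lam) * (u * a2%:R) by ring.
exact: le_x.
Qed.

Lemma newton_polygon_mul (F : fieldType) (R : realFieldType)
    (g h : {poly {poly F}}) (a1 b1 a2 b2 : nat) :
  g`_b1`_a1 != 0 -> h`_b2`_a2 != 0 ->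
  newton_polygon R (g * h) ((a1 + a2)%:R, (b1 + b2)%:R).
Proof.
move=> nz1 nz2.
have Pg : (a1, b1) \in bisupport g by rewrite mem_bisupport.
have Qh : (a2, b2) \in bisupport h by rewrite mem_bisupport.
have [xU [NU]] := newton_polygon_mul_line (1 : R) Pg Qh.
have [xL [NL]] := newton_polygon_mul_line (-1 : R) Pg Qh.
rewrite /= !mul1r !mulN1r lerN2 => le_L le_U.
by apply: newton_polygon_segment NL NU _; rewrite le_L le_U.
Qed.

Lemma coef_mul_size_le_term (K : nzRingType) (p q : {poly {poly K}}) (i : nat) :
  (p * q)`_i != 0 ->
  exists2 j, (j <= i)%N &
    p`_j * q`_(i - j) != 0 /\ leq (size (p * q)`_i) (size (p`_j * q`_(i - j))).
Proof.
rewrite coefM => nz.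
have [j max_j] := bigop.eq_bigmax (fun j : 'I_i.+1 => size (p`_j * q`_(i - j)))
  (ltac:(by rewrite card_ord)).
have le_size : leq (size (\sum_(j < i.+1) p`_j * q`_(i - j)))
                  (size (p`_j * q`_(i - j))).
  by rewrite -max_j; exact: size_sum.
exists j; first by rewrite -ltnS.
split => //; apply: contraNneq nz => term0.
by move: le_size; rewrite term0 size_poly0 leqn0 size_poly_eq0.
Qed.

(* The derivative contributes (l g_l) X^(l-1), hence the index sum [i.+1]. *)
Lemma size_coef_mul_deriv (F : fieldType) (h g : {poly {poly F}}) (i : nat) :
  (h * g^`())`_i != 0 ->
  exists k l, [/\ h`_k != 0, g`_l != 0, (k + l = i.+1)%N &
    leq (size (h * g^`())`_i).-1 ((size h`_k).-1 + (size g`_l).-1)].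
Proof.
move=> /coef_mul_size_le_term [j le_ji []]; rewrite coef_deriv.
set l := (i - j).+1 => nz le_size.
have hj_neq0 : h`_j != 0 by apply: contraNneq nz => ->; rewrite mul0r.
have gl_neq0 : g`_l != 0 by apply: contraNneq nz => ->; rewrite mul0rn mulr0.
exists j, l; split => //; first by rewrite /l addnS subnKC.
have le_mul := size_polyMleq h`_j (g`_l *+ l).
have le_muln : leq (size (g`_l *+ l)) (size g`_l) by rewrite -scaler_nat size_scale_leq.
move: hj_neq0 gl_neq0 le_size le_mul le_muln; rewrite -!size_poly_gt0.
move: (size (h * g^`())`_i) (size (h`_j * (g`_l *+ l))) (size h`_j).
move: (size (g`_l *+ l)) (size g`_l); lia.
Qed.

Theorem lemma5p3 (F : finFieldType) (R : realType) (n : nat)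
  (f g phi : {poly {poly F}}) :
  (1 <= n)%N -> size f = n.+1 ->
  g != 0 -> (exists h : {poly {poly F}}, f = g * h) ->
  g * phi = f * g^`() ->
  forall i : nat, (i < n)%N -> phi`_i != 0 ->
    (exists m : nat, B_set R f i m) /\
    (exists m : nat, B_set R f i m /\ leq (size phi`_i).-1 m).
Proof.
move=> _ _ g_neq0 [h ->] phiE i _.
have -> : phi = h * g^`() by apply: (mulfI g_neq0); rewrite phiE mulrA.
move=> /size_coef_mul_deriv [k [l [hk_neq0 gl_neq0 sum_kl le_deg]]].
pose d := addn (size g`_l).-1 (size h`_k).-1.
have N_d : newton_polygon R (g * h) (d%:R, i.+1%:R).
  rewrite -sum_kl addnC.
  by apply: newton_polygon_mul; rewrite -lead_coefE lead_coef_eq0.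
have B_d : B_set R (g * h) i d.
  exists (d%:R, i.+1%:R), (0, -1); split => //.
  by rewrite addr0 -addn1 natrD addrK.
by split; exists d => //; split; rewrite // /d addnC.
Qed.
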